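(* Let $M$ be an $n$-dimensional manifold and let $g(t)$, $t\in[0,T)$, be a solution of the Ricci flow $\partial_t g_{ij}=-2R_{ij}$ on $M$. Let $\xi=\xi_{i_1\dots i_p}(x,t)$ be a smooth family of $p$-forms (anti-symmetric covariant $p$-tensors) satisfying the heat equation $$\frac{\partial \xi_{i_1\dots i_p}}{\partial t}=\Delta_d\,\xi_{i_1\dots i_p},$$ where $\Delta_d$ is the Hodge–de Rham Laplacian of $g(t)$ in the form $$\Delta_d\,\xi_{i_1\dots i_p}=g^{jk}\xi_{i_1\dots i_p;j;k}-\sum_{s=1}^{p}\xi_{i_1\dots i_{s-1}a\,i_{s+1}\dots i_p}R^{a}_{\ i_s}-\sum_{1\le s<t\le p}\xi_{i_1\dots i_{s-1}a\,i_{s+1}\dots i_{t-1}b\,i_{t+1}\dots i_p}R^{ab}_{\ \ i_si_t}.$$ Then $$\frac{\partial}{\partial t}|\xi|^2=\Delta|\xi|^2-2\,\xi^{i_1\dots i_p;j}\xi_{i_1\dots i_p;j}-p(p-1)\,\xi_{ij i_1\dots i_{p-2}}R^{ij}_{\ \ kl}\,\xi^{kl i_1\dots i_{p-2}},$$ where $|\xi|^2=g^{i_1k_1}\cdots g^{i_pk_p}\xi_{i_1\dots i_p}\xi_{k_1\dots k_p}$ and $\Delta f=g^{ij}f_{;i;j}$ is the Laplacian of $g(t)$ on functions.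
   Context: All quantities are computed with respect to $g(t)$; indices are raised and lowered with $g(t)$, and ''$;j$'' denotes covariant differentiation. Curvature conventions: $R^{l}_{\ ijk}=\partial_i\Gamma^l_{jk}-\partial_j\Gamma^l_{ik}+\Gamma^l_{im}\Gamma^m_{jk}-\Gamma^l_{jm}\Gamma^m_{ik}$, $R_{ijkl}=g_{hl}R^{h}_{\ ijk}$, $R_{jk}=R^{i}_{\ ijk}$ (Ricci tensor), $R^{a}_{\ i}=g^{ab}R_{bi}$, and $R^{ij}_{\ \ kl}=g^{ia}g^{jb}R_{abkl}$. *)

(* Local-coordinate formalization of
   Ricci flow / p-forms on a coordinate chart U (open subset of R^n). *)
From HB Require Import structures.
From mathcomp Require Import all_boot all_order all_algebra.
From mathcomp Require Import all_classical all_reals all_analysis.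
From mathcomp Require Import fingroup perm.
Set Implicit Arguments. Unset Strict Implicit. Unset Printing Implicit Defensive.
Import Order.TTheory GRing.Theory Num.Theory.
Import numFieldNormedType.Exports.
Local Open Scope classical_set_scope.
Local Open Scope ring_scope.

Section RicciDefs.
Context {R : realType} {n : nat}.

Definition stfun := 'rV[R]_n -> R -> R.

Definition evec (i : 'I_n) : 'rV[R]_n := delta_mx 0 i.

Definition dx (f : stfun) (i : 'I_n) : stfun :=
  fun x t => 'D_(evec i) (fun y => f y t) x.
Definition dt (f : stfun) : stfun :=
  fun x t => 'D_1 (fun s : R => f x s) t.

Inductive pdop := PDx of 'I_n | PDt.
Fixpoint pds (os : seq pdop) (f : stfun) : stfun :=
  match os with
  | [::] => f
  | o :: os' => let h := pds os' f in
      match o with PDx i => dx h i | PDt => dt h end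
  end.
Definition smooth_on (U : set 'rV[R]_n) (T : R) (f : stfun) : Prop :=
  forall os x t, U x -> 0 < t < T ->
    [/\ forall i, derivable (fun y => pds os f y t) x (evec i),
        derivable (fun s : R => pds os f x s) t 1
      & {for (x, t), continuous (fun z : 'rV[R]_n * R => pds os f z.1 z.2)}].

Definition metric := 'I_n -> 'I_n -> stfun.
Definition gmx (g : metric) x t : 'M[R]_n := \matrix_(i, j) g i j x t.
Definition ginv (g : metric) (i j : 'I_n) : stfun :=
  fun x t => invmx (gmx g x t) i j.

Definition Chr (g : metric) (l j k : 'I_n) : stfun := fun x t =>
  2^-1 * \sum_(m < n) ginv g l m x t *
     (dx (g m k) j x t + dx (g m j) k x t - dx (g j k) m x t).

Definition Riem (g : metric) (l i j k : 'I_n) : stfun := fun x t =>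
  dx (Chr g l j k) i x t - dx (Chr g l i k) j x t
  + \sum_(m < n) (Chr g l i m x t * Chr g m j k x t
                  - Chr g l j m x t * Chr g m i k x t).
Definition Riem_low (g : metric) (i j k l : 'I_n) : stfun := fun x t =>
  \sum_(h < n) g h l x t * Riem g h i j k x t.
Definition Ric (g : metric) (j k : 'I_n) : stfun := fun x t =>
  \sum_(i < n) Riem g i i j k x t.
Definition Ric_up (g : metric) (a i : 'I_n) : stfun := fun x t =>
  \sum_(b < n) ginv g a b x t * Ric g b i x t.
Definition Riem_up (g : metric) (i j k l : 'I_n) : stfun := fun x t =>
  \sum_(a < n) \sum_(b < n) ginv g i a x t * ginv g j b x t * Riem_low g a b k l x t.

Definition tensor (m : nat) := {ffun 'I_m -> 'I_n} -> stfun.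

Definition upd m (I : {ffun 'I_m -> 'I_n}) (s : 'I_m) (a : 'I_n) :
  {ffun 'I_m -> 'I_n} := [ffun k => if k == s then a else I k].
Definition snoc m (I : {ffun 'I_m -> 'I_n}) (j : 'I_n) :
  {ffun 'I_m.+1 -> 'I_n} :=
  [ffun k => if unlift ord_max k is Some k' then I k' else j].
Definition init m (J : {ffun 'I_m.+1 -> 'I_n}) : {ffun 'I_m -> 'I_n} :=
  [ffun k => J (lift ord_max k)].

(* covariant derivative: (cov T)_{i_1..i_m j} = T_{i_1..i_m;j} *)
Definition cov (g : metric) m (T : tensor m) : tensor m.+1 := fun J x t =>
  dx (T (init J)) (J ord_max) x t
  - \sum_(s < m) \sum_(a < n)
      Chr g a (J ord_max) (init J s) x t * T (upd (init J) s a) x t.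

Definition inner (g : metric) m (A B : tensor m) : stfun := fun x t =>
  \sum_(J : {ffun 'I_m -> 'I_n}) \sum_(L : {ffun 'I_m -> 'I_n})
    (\prod_(s < m) ginv g (J s) (L s) x t) * A J x t * B L x t.

Definition norm2 (g : metric) p (xi : tensor p) : stfun := inner g xi xi.

Definition lap_fun (g : metric) (f : stfun) : stfun := fun x t =>
  \sum_(i < n) \sum_(j < n) ginv g i j x t *
    cov g (cov g ((fun _ => f) : tensor 0))
      (snoc (snoc [ffun k : 'I_0 => i] i) j) x t.

Definition hodge_lap (g : metric) p (xi : tensor p) : tensor p := fun I x t =>
  \sum_(j < n) \sum_(k < n) ginv g j k x t * cov g (cov g xi) (snoc (snoc I j) k) x t
  - \sum_(s < p) \sum_(a < n) xi (upd I s a) x t * Ric_up g a (I s) x t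
  - \sum_(s < p) \sum_(u < p | (s < u)%N) \sum_(a < n) \sum_(b < n)
       xi (upd (upd I s a) u b) x t * Riem_up g a b (I s) (I u) x t.

(* xi_{ij i_1..i_{p-2}} R^{ij}_{kl} xi^{kl i_1..i_{p-2}}  (0 if p < 2) *)
Definition curv_term (g : metric) p : tensor p -> stfun :=
  match p as p' return tensor p' -> stfun with
  | q.+2 => fun xi x t =>
      \sum_(J : {ffun 'I_q.+2 -> 'I_n}) \sum_(L : {ffun 'I_q.+2 -> 'I_n})
      \sum_(k < n) \sum_(l < n)
        xi J x t * Riem_up g (J ord0) (J (lift ord0 ord0)) k l x t
        * ginv g k (L ord0) x t * ginv g l (L (lift ord0 ord0)) x t
        * (\prod_(s < q) ginv g (J (lift ord0 (lift ord0 s)))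
                                (L (lift ord0 (lift ord0 s))) x t)
        * xi L x t
  | _ => fun _ _ _ => 0
  end.

Definition antisym p (xi : tensor p) : Prop :=
  forall (I : {ffun 'I_p -> 'I_n}) (s u : 'I_p), s != u ->
    forall x t, xi [ffun k => I (tperm s u k)] x t = - xi I x t.

End RicciDefs.

From HB Require Import structures.
From mathcomp Require Import all_boot all_order all_algebra.
From mathcomp Require Import all_classical all_reals all_analysis.
From mathcomp Require Import fingroup perm ring.
Import Order.TTheory GRing.Theory Num.Theory.
Import numFieldNormedType.Exports.
Local Open Scope classical_set_scope.
Local Open Scope ring_scope.

(* Differentiating the
   contraction |xi|^2 = g^{IK} xi_I xi_K, the variation of g^{-1} is
   -g^{-1} (dg) g^{-1}.  In space, since the Christoffel symbols are those of
   the Levi-Civita connection, this term turns the partial derivatives of xi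
   into covariant ones: d_k <A, B> = <A_{;k}, B> + <A, B_{;k}>, whence
   Delta |xi|^2 = 2 <g^{jk} xi_{;jk}, xi> + 2 |nabla xi|^2.  In time, the Ricci
   flow gives d_t g^{ab} = 2 g^{ac} R_{cd} g^{db}, whose contribution to
   d_t |xi|^2 cancels the two Ricci terms of Delta_d xi paired with xi.  What is
   left of Delta_d is the Riemann term; by antisymmetry of xi, each of the
   p(p-1)/2 pairs of slots (s, u) contributes the same contraction as the
   pair of the first two slots. *)

Section DeriveBig.
Context {R : realType} {V : normedModType R}.
Implicit Types (f h : V -> R) (z v : V).

Lemma deriveM_pointwise f h z v : derivable f z v -> derivable h z v ->
  'D_v (fun y => f y * h y) z = f z * 'D_v h z + h z * 'D_v f z.
Proof. exact: deriveM. Qed.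

Lemma deriveD_pointwise f h z v : derivable f z v -> derivable h z v ->
  'D_v (fun y => f y + h y) z = 'D_v f z + 'D_v h z.
Proof. exact: deriveD. Qed.

Lemma deriveZ_pointwise (c : R) f z v : derivable f z v ->
  'D_v (fun y => c * f y) z = c * 'D_v f z.
Proof.
move=> df; have dc : derivable (fun _ : V => c) z v by exact: derivable_cst.
by rewrite deriveM_pointwise // derive_cst mulr0 addr0.
Qed.

Lemma derivable_big_sum (I : Type) (r : seq I) (P : pred I) (F : I -> V -> R) z v :
  (forall i, P i -> derivable (F i) z v) ->
  derivable (fun y => \sum_(i <- r | P i) F i y) z v.
Proof.
move=> dF; elim: r => [|a r IH].
  rewrite [X in derivable X](_ : _ = fun _ => 0); first exact: derivable_cst.
  by apply/funext => y; rewrite big_nil.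
rewrite [X in derivable X](_ : _ = fun y => (if P a then F a y else 0) +
                                           \sum_(i <- r | P i) F i y).
  by apply: derivableD IH; case Pa: (P a); [exact: dF | exact: derivable_cst].
by apply/funext => y; rewrite big_cons; case: ifP; rewrite ?add0r.
Qed.

Lemma derive_big_sum (I : Type) (r : seq I) (P : pred I) (F : I -> V -> R) z v :
  (forall i, P i -> derivable (F i) z v) ->
  'D_v (fun y => \sum_(i <- r | P i) F i y) z = \sum_(i <- r | P i) 'D_v (F i) z.
Proof.
move=> dF; elim: r => [|a r IH].
  rewrite big_nil [X in 'D_v X z](_ : _ = fun _ => 0); first exact: derive_cst.
  by apply/funext => y; rewrite big_nil.
rewrite big_cons; case Pa: (P a).
  rewrite [X in 'D_v X z](_ : _ = fun y => F a y + \sum_(i <- r | P i) F i y).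
    by rewrite deriveD_pointwise ?IH //; [exact: dF | exact: derivable_big_sum].
  by apply/funext => y; rewrite big_cons Pa.
rewrite -IH; congr ('D_v _ z); apply/funext => y.
by rewrite big_cons Pa.
Qed.

Lemma derivable_big_prod (I : Type) (r : seq I) (P : pred I) (F : I -> V -> R) z v :
  (forall i, P i -> derivable (F i) z v) ->
  derivable (fun y => \prod_(i <- r | P i) F i y) z v.
Proof.
move=> dF; elim: r => [|a r IH].
  rewrite [X in derivable X](_ : _ = fun _ => 1); first exact: derivable_cst.
  by apply/funext => y; rewrite big_nil.
rewrite [X in derivable X](_ : _ = fun y => (if P a then F a y else 1) *
                                           \prod_(i <- r | P i) F i y).
  by apply: derivableM IH; case Pa: (P a); [exact: dF | exact: derivable_cst].
by apply/funext => y; rewrite big_cons; case: ifP; rewrite ?mul1r.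
Qed.

Lemma derive_big_prod (I : eqType) (r : seq I) (F : I -> V -> R) z v :
  uniq r -> (forall i, derivable (F i) z v) ->
  'D_v (fun y => \prod_(i <- r) F i y) z =
  \sum_(i <- r) 'D_v (F i) z * \prod_(j <- r | j != i) F j z.
Proof.
move=> + dF; elim: r => [_|a r IH] /=.
  rewrite big_nil [X in 'D_v X z](_ : _ = fun _ => 1); first exact: derive_cst.
  by apply/funext => y; rewrite big_nil.
case/andP=> a_r r_uniq.
rewrite [X in 'D_v X z](_ : _ = fun y => F a y * \prod_(i <- r) F i y); last first.
  by apply/funext => y; rewrite big_cons.
rewrite deriveM_pointwise //; last by apply: derivable_big_prod => i _.
rewrite IH // big_cons [X in _ = _ * X + _]big_cons eqxx /= mulr_sumr addrC.
have -> : \prod_(j <- r | j != a) F j z = \prod_(j <- r) F j z.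
  rewrite big_seq_cond [RHS]big_seq_cond; apply: eq_bigl => j.
  by case jr: (j \in r) => //=; apply: contraNneq a_r => <-.
congr (_ + _); first by rewrite mulrC.
rewrite [LHS]big_seq [RHS]big_seq; apply: eq_bigr => i ir.
rewrite big_cons; case: eqP => [ai|_]; first by move: a_r; rewrite ai ir.
by rewrite mulrCA.
Qed.

End DeriveBig.

Section DeriveInvmx.
Context {R : realType} {V : normedModType R} {n : nat}.
Variables (M : V -> 'M[R]_n) (z v : V).
Hypothesis dM : forall i j, derivable (fun y => M y i j) z v.
Hypothesis unitM : \forall y \near z, M y \in unitmx.

Lemma derivable_invmx i j : derivable (fun y => invmx (M y) i j) z v.
Proof.
have ddet : derivable (fun y => \det (M y)) z v.
  apply: derivable_big_sum => s _; apply: derivableM; first exact: derivable_cst.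
  by apply: derivable_big_prod => k _.
have dadj : derivable (fun y => \adj (M y) i j) z v.
  rewrite [X in derivable X](_ : _ = fun y => \sum_(s : 'S_n | s j == i)
      (-1) ^+ s * \prod_(k | j != k) M y k (s k)).
    apply: derivable_big_sum => s _; apply: derivableM; first exact: derivable_cst.
    by apply: derivable_big_prod => k _.
  by apply/funext => y; rewrite mxE expand_cofactor.
apply: (@near_eq_derivable _ _ _ (fun y => (\det (M y))^-1 * \adj (M y) i j)).
  by apply: filterS unitM => y Mu; rewrite /invmx Mu [RHS]mxE.
apply: derivableM dadj; apply: derivableV ddet.
by rewrite -unitfE -unitmxE; exact: (nbhs_singleton unitM).
Qed.

Lemma derive_invmx i j : 'D_v (fun y => invmx (M y) i j) z =
  - \sum_a \sum_b invmx (M z) i a * 'D_v (fun y => M y a b) z * invmx (M z) b j.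
Proof.
have Mz_unit : M z \in unitmx by exact: (nbhs_singleton unitM).
set Mi := invmx (M z).
pose DM := \matrix_(a, b) 'D_v (fun y => M y a b) z.
pose DI := \matrix_(a, b) 'D_v (fun y => invmx (M y) a b) z.
have M_DI : M z *m DI = - (DM *m Mi).
  apply/matrixP => a b; rewrite !mxE.
  have : 'D_v (fun y => \sum_m M y a m * invmx (M y) m b) z = 0.
    rewrite (@near_eq_derive _ _ _ _ (fun _ => (1%:M : 'M[R]_n) a b)).
      exact: derive_cst.
    apply: filterS unitM => y Mu.
    by move/matrixP: (mulmxV Mu) => /(_ a b); rewrite mxE.
  rewrite derive_big_sum => [|m _]; last first.
    by apply: derivableM => //; exact: derivable_invmx.
  rewrite (eq_bigr (fun m => M z a m * DI m b + DM a m * Mi m b)) => [|m _].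
    rewrite big_split /= => /eqP; rewrite addr_eq0 => /eqP ->.
    by rewrite -sumrN; apply: eq_bigr => m _; rewrite !mxE.
  rewrite deriveM_pointwise //; last exact: derivable_invmx.
  by rewrite !mxE; ring.
have : DI = - (Mi *m DM *m Mi) by rewrite -mulmxA -mulmxN -M_DI mulKmx.
move/matrixP/(_ i j); rewrite !mxE => ->; congr (- _).
rewrite exchange_big /=; apply: eq_bigr => b _; rewrite !mxE mulr_suml.
by apply: eq_bigr => a _; rewrite !mxE.
Qed.

End DeriveInvmx.

Section Contraction.
Context {R : realType} {n : nat}.
Local Notation idx m := {ffun 'I_m -> 'I_n}.
Implicit Types (G dG K : 'I_n -> 'I_n -> R).

Lemma upd_same {m} (J : idx m) s a : upd J s a s = a.
Proof. by rewrite ffunE eqxx. Qed.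

Lemma upd_other {m} (J : idx m) s a r : r != s -> upd J s a r = J r.
Proof. by move=> rs; rewrite ffunE (negbTE rs). Qed.

Lemma upd_id {m} (J : idx m) s : upd J s (J s) = J.
Proof. by apply/ffunP => r; rewrite ffunE; case: eqP => // ->. Qed.

Lemma upd_upd {m} (J : idx m) s a b : upd (upd J s a) s b = upd J s b.
Proof. by apply/ffunP => r; rewrite !ffunE; case: eqP. Qed.

Lemma prod_upd_out {m} G (P : pred 'I_m) (J L : idx m) s a :
  (forall r, P r -> r != s) ->
  \prod_(r | P r) G (upd J s a r) (L r) = \prod_(r | P r) G (J r) (L r).
Proof. by move=> Ps; apply: eq_bigr => r /Ps rs; rewrite upd_other. Qed.

(* [(J, c) |-> (upd J s c, J s)] is an involution of [idx m * 'I_n]. *)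
Lemma sum_upd_reindex {m} (s : 'I_m) (F Phi : idx m -> 'I_n -> R) :
  (forall J c, F J c = Phi (upd J s c) (J s)) ->
  \sum_(J : idx m) \sum_(c : 'I_n) F J c = \sum_(J : idx m) \sum_(a : 'I_n) Phi J a.
Proof.
move=> FE; rewrite !pair_bigA /=.
pose h (Jc : idx m * 'I_n) := (upd Jc.1 s Jc.2, Jc.1 s).
have hK : involutive h by case=> J c; rewrite /h /= upd_upd upd_id upd_same.
rewrite [RHS](reindex h) /=; last by apply: onW_bij; exact: inv_bij.
by apply: eq_bigr => -[J c] _; rewrite FE.
Qed.

Definition gcontract {m} G (A B : idx m -> R) : R :=
  \sum_(J : idx m) \sum_(L : idx m) (\prod_(s < m) G (J s) (L s)) * A J * B L.

(* The derivative of [gcontract G A B] along a variation [dG] of [G]. *)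
Definition gcontract_var {m} G dG (A B : idx m -> R) : R :=
  \sum_(J : idx m) \sum_(L : idx m)
    (\sum_(s < m) dG (J s) (L s) * \prod_(r < m | r != s) G (J r) (L r)) * A J * B L.

(* [K] acting as a derivation on every slot of [A]. *)
Definition slot_act {m} K (A : idx m -> R) (J : idx m) : R :=
  \sum_(s < m) \sum_(c : 'I_n) K (J s) c * A (upd J s c).

Lemma eq_gcontract {m} G {A A' B B' : idx m -> R} :
  A =1 A' -> B =1 B' -> gcontract G A B = gcontract G A' B'.
Proof.
by move=> AA' BB'; apply: eq_bigr => J _; apply: eq_bigr => L _; rewrite AA' BB'.
Qed.

Lemma gcontract_swap {m} G (A B : idx m -> R) :
  gcontract G A B = gcontract (fun a b => G b a) B A.
Proof.
rewrite /gcontract exchange_big; apply: eq_bigr => L _; apply: eq_bigr => J _.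
by rewrite mulrAC.
Qed.

Lemma gcontractC {m} G (A B : idx m -> R) : (forall a b, G a b = G b a) ->
  gcontract G A B = gcontract G B A.
Proof.
move=> GC; rewrite gcontract_swap; apply: eq_bigr => J _; apply: eq_bigr => L _.
by congr (_ * _ * _); apply: eq_bigr => s _; rewrite GC.
Qed.

Lemma gcontract_suml {m} G (I : Type) (r : seq I) (P : pred I) (F : I -> idx m -> R)
    (B : idx m -> R) :
  gcontract G (fun J => \sum_(i <- r | P i) F i J) B =
  \sum_(i <- r | P i) gcontract G (F i) B.
Proof.
rewrite /gcontract; under eq_bigr => J _ do under eq_bigr => L _ do
  rewrite mulr_sumr mulr_suml.
by under eq_bigr => J _ do rewrite exchange_big; rewrite exchange_big.
Qed.

Lemma gcontractDl {m} G (A1 A2 B : idx m -> R) :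
  gcontract G (fun J => A1 J + A2 J) B = gcontract G A1 B + gcontract G A2 B.
Proof.
rewrite /gcontract -big_split; apply: eq_bigr => J _; rewrite -big_split.
by apply: eq_bigr => L _ /=; ring.
Qed.

Lemma gcontractBl {m} G (A1 A2 B : idx m -> R) :
  gcontract G (fun J => A1 J - A2 J) B = gcontract G A1 B - gcontract G A2 B.
Proof.
rewrite /gcontract -sumrB; apply: eq_bigr => J _; rewrite -sumrB.
by apply: eq_bigr => L _ /=; ring.
Qed.

Lemma gcontractBr {m} G (A B1 B2 : idx m -> R) :
  gcontract G A (fun L => B1 L - B2 L) = gcontract G A B1 - gcontract G A B2.
Proof.
by rewrite gcontract_swap gcontractBl [gcontract G A B1]gcontract_swap
  [gcontract G A B2]gcontract_swap.
Qed.

Lemma gcontractZl {m} G (c : R) (A B : idx m -> R) :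
  gcontract G (fun J => c * A J) B = c * gcontract G A B.
Proof.
rewrite /gcontract mulr_sumr; apply: eq_bigr => J _; rewrite mulr_sumr.
by apply: eq_bigr => L _ /=; ring.
Qed.

Lemma gcontract_var_swap {m} G dG (A B : idx m -> R) :
  gcontract_var G dG A B = gcontract_var (fun a b => G b a) (fun a b => dG b a) B A.
Proof.
rewrite /gcontract_var exchange_big; apply: eq_bigr => L _; apply: eq_bigr => J _.
by rewrite mulrAC.
Qed.

Lemma gcontract_var_lin {m} G dG d1 d2 (c1 c2 : R) (A B : idx m -> R) :
  (forall a b, dG a b = c1 * d1 a b + c2 * d2 a b) ->
  gcontract_var G dG A B = c1 * gcontract_var G d1 A B + c2 * gcontract_var G d2 A B.
Proof.
move=> dGE; rewrite /gcontract_var !mulr_sumr -big_split; apply: eq_bigr => J _.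
rewrite !mulr_sumr -big_split; apply: eq_bigr => L _.
rewrite !mulr_suml !mulr_sumr -big_split; apply: eq_bigr => s _.
by rewrite /= dGE; ring.
Qed.

Lemma gcontract_varE {m} G dG (A B : idx m -> R) : gcontract_var G dG A B =
  \sum_(s < m) \sum_(J : idx m) \sum_(L : idx m)
     dG (J s) (L s) * \prod_(r < m | r != s) G (J r) (L r) * A J * B L.
Proof.
rewrite [RHS]exchange_big; apply: eq_bigr => J _.
by rewrite [RHS]exchange_big; apply: eq_bigr => L _; rewrite !mulr_suml.
Qed.

Lemma gcontract_slot_actl {m} G K (A B : idx m -> R) :
  gcontract G (slot_act K A) B =
  gcontract_var G (fun a b => \sum_(c : 'I_n) G c b * K c a) A B.
Proof.
rewrite gcontract_suml gcontract_varE; apply: eq_bigr => s _.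
rewrite /gcontract exchange_big [RHS]exchange_big; apply: eq_bigr => L _.
under eq_bigr => J _ do rewrite mulr_sumr mulr_suml.
rewrite (@sum_upd_reindex m s _ (fun J a => G a (L s) * K a (J s) *
   \prod_(r | r != s) G (J r) (L r) * A J * B L)).
  by apply: eq_bigr => J _; rewrite !mulr_suml; apply: eq_bigr.
move=> J c; rewrite upd_same (bigD1 s) //= prod_upd_out //; ring.
Qed.

Lemma gcontract_slot_actr {m} G K (A B : idx m -> R) :
  gcontract G A (slot_act K B) =
  gcontract_var G (fun a b => \sum_(c : 'I_n) G a c * K c b) A B.
Proof. by rewrite gcontract_swap gcontract_slot_actl gcontract_var_swap. Qed.

Lemma snoc_max {m} (J : idx m) j : snoc J j ord_max = j.
Proof. by rewrite ffunE unlift_none. Qed.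

Lemma snoc_lift {m} (J : idx m) j k : snoc J j (lift ord_max k) = J k.
Proof. by rewrite ffunE liftK. Qed.

Lemma init_snoc {m} (J : idx m) j : init (snoc J j) = J.
Proof. by apply/ffunP => k; rewrite ffunE snoc_lift. Qed.

Lemma snoc_init {m} (J : idx m.+1) : snoc (init J) (J ord_max) = J.
Proof.
apply/ffunP => k; rewrite ffunE; case: unliftP => [k' ->|->] //.
by rewrite ffunE.
Qed.

Lemma upd_snoc_lift {m} (J : idx m) j s a :
  upd (snoc J j) (lift ord_max s) a = snoc (upd J s a) j.
Proof.
apply/ffunP => k; rewrite !ffunE; case: unliftP => [k' ->|->].
  by rewrite (inj_eq lift_inj) ffunE.
by rewrite (negbTE (neq_lift _ _)).
Qed.

Lemma upd_snoc_max {m} (J : idx m) j a : upd (snoc J j) ord_max a = snoc J a.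
Proof.
apply/ffunP => k; rewrite !ffunE; case: unliftP => [k' ->|->].
  by rewrite eq_sym (negbTE (neq_lift _ _)).
by rewrite eqxx.
Qed.

Lemma widen_ord_lift_max {m} (s : 'I_m) : widen_ord (leqnSn m) s = lift ord_max s.
Proof. by apply/val_inj; rewrite /= /bump leqNgt ltn_ord. Qed.

Lemma sum_snoc {m} (F : idx m.+1 -> R) :
  \sum_(J : idx m.+1) F J = \sum_(J : idx m) \sum_(i : 'I_n) F (snoc J i).
Proof.
rewrite pair_bigA /= (reindex (fun Ji : idx m * 'I_n => snoc Ji.1 Ji.2)) //=.
exists (fun J => (init J, J ord_max)) => [[J i] _|J _] /=.
  by rewrite init_snoc snoc_max.
exact: snoc_init.
Qed.

Lemma prod_snoc {m} G (J L : idx m) i j :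
  \prod_(r < m.+1) G (snoc J i r) (snoc L j r) =
  (\prod_(r < m) G (J r) (L r)) * G i j.
Proof.
rewrite big_ord_recr /= !snoc_max; congr (_ * _); apply: eq_bigr => r _.
by rewrite widen_ord_lift_max !snoc_lift.
Qed.

Lemma gcontract_snoc {m} G (A B : idx m.+1 -> R) :
  gcontract G A B = \sum_i \sum_j G i j *
     gcontract G (fun J => A (snoc J i)) (fun L => B (snoc L j)).
Proof.
rewrite /gcontract sum_snoc.
transitivity (\sum_(J : idx m) \sum_i \sum_(L : idx m) \sum_j
   (\prod_(r < m) G (J r) (L r)) * G i j * A (snoc J i) * B (snoc L j)).
  apply: eq_bigr => J _; apply: eq_bigr => i _; rewrite sum_snoc.
  by apply: eq_bigr => L _; apply: eq_bigr => j _; rewrite prod_snoc.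
rewrite exchange_big; apply: eq_bigr => i _.
under eq_bigr => J _ do rewrite exchange_big.
rewrite exchange_big; apply: eq_bigr => j _; rewrite /= mulr_sumr.
apply: eq_bigr => J _; rewrite mulr_sumr; apply: eq_bigr => L _; ring.
Qed.

End Contraction.

Section DeriveContract.
Context {R : realType} {V : normedModType R} {n m : nat}.
Variables (G : 'I_n -> 'I_n -> V -> R) (A B : {ffun 'I_m -> 'I_n} -> V -> R).
Variables (z v : V).
Hypothesis dG : forall a b, derivable (G a b) z v.
Hypothesis dA : forall J, derivable (A J) z v.
Hypothesis dB : forall L, derivable (B L) z v.

Let derivable_gprod (J L : {ffun 'I_m -> 'I_n}) : derivable (fun y => \prod_(s < m) G (J s) (L s) y) z v.
Proof. by apply: derivable_big_prod => s _. Qed.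

Let derivable_term (J L : {ffun 'I_m -> 'I_n}) :
  derivable (fun y => \prod_(s < m) G (J s) (L s) y * A J y * B L y) z v.
Proof. by apply: derivableM => //; apply: derivableM. Qed.

Lemma derivable_gcontract :
  derivable (fun y => gcontract (fun a b => G a b y) (A^~ y) (B^~ y)) z v.
Proof.
pose term (J L : {ffun 'I_m -> 'I_n}) y := \prod_(s < m) G (J s) (L s) y * A J y * B L y.
apply: (derivable_big_sum _ _ _ (fun J y => \sum_L term J L y)) => J _.
apply: (derivable_big_sum _ _ _ (term J)) => L _; exact: derivable_term.
Qed.

Lemma derive_gcontract :
  'D_v (fun y => gcontract (fun a b => G a b y) (A^~ y) (B^~ y)) z =
  gcontract_var (fun a b => G a b z) (fun a b => 'D_v (G a b) z) (A^~ z) (B^~ z)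
  + gcontract (fun a b => G a b z) (fun J => 'D_v (A J) z) (B^~ z)
  + gcontract (fun a b => G a b z) (A^~ z) (fun L => 'D_v (B L) z).
Proof.
pose term (J L : {ffun 'I_m -> 'I_n}) y := \prod_(s < m) G (J s) (L s) y * A J y * B L y.
rewrite /gcontract (derive_big_sum _ _ _ (fun J y => \sum_L term J L y)); last first.
  move=> J _; apply: (derivable_big_sum _ _ _ (term J)) => L _.
  exact: derivable_term.
rewrite /gcontract_var -!big_split; apply: eq_bigr => J _ /=.
rewrite (derive_big_sum _ _ _ (term J)) => [|L _]; last exact: derivable_term.
rewrite -!big_split; apply: eq_bigr => L _ /=.
rewrite /term (deriveM_pointwise (fun y => _ * A J y)) //; last exact: derivableM.
rewrite deriveM_pointwise // derive_big_prod //; last exact: index_enum_uniq.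
ring.
Qed.

End DeriveContract.

Lemma sum_pairs_lt {R : numDomainType} (p : nat) :
  2 * \sum_(s < p) \sum_(u < p | (s < u)%N) (1 : R) = (p * (p - 1))%:R.
Proof.
set X := \sum_(s < p) \sum_(u < p | (s < u)%N) (1 : R).
have X_gt : \sum_(s < p) \sum_(u < p | (u < s)%N) (1 : R) = X.
  rewrite /X; under eq_bigr => s _ do rewrite big_mkcond.
  by rewrite exchange_big; apply: eq_bigr => u _; rewrite [RHS]big_mkcond.
have all_pairs : \sum_(s < p) \sum_(u < p) (1 : R) =
    X + \sum_(s < p) \sum_(u < p | (u < s)%N) (1 : R) + \sum_(s < p) (1 : R).
  rewrite /X -!big_split; apply: eq_bigr => s _ /=.
  rewrite (bigID (fun u : 'I_p => (s < u)%N)) /= -addrA; congr (_ + _).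
  rewrite (bigID (fun u : 'I_p => (u < s)%N)) /=; congr (_ + _).
    by apply: eq_bigl => u; case: ltngtP.
  rewrite (big_pred1 s) // => u /=; rewrite -[u == s]/(val u == val s).
  by case: ltngtP.
move: all_pairs; rewrite X_gt !sumr_const !card_ord => all_pairs.
have pp : (p * (p - 1) + p = p * p)%N.
  by case: p {X X_gt all_pairs} => // p; rewrite subSS subn0 -mulnSr.
apply: (@addIr _ (p%:R)); rewrite -natrD pp natrM [RHS]mulr_natr all_pairs; ring.
Qed.

Section PairContraction.
Context {R : realType} {n : nat}.
Local Notation idx m := {ffun 'I_m -> 'I_n}.
Implicit Types (G : 'I_n -> 'I_n -> R) (Rm : 'I_n -> 'I_n -> 'I_n -> 'I_n -> R).

Definition pair_contract {m} G Rm (X : idx m -> R) (s u : 'I_m) : R :=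
  \sum_(J : idx m) \sum_(L : idx m) \sum_(c : 'I_n) \sum_(d : 'I_n)
    X J * Rm (J s) (J u) c d * G c (L s) * G d (L u) *
    (\prod_(r < m | (r != s) && (r != u)) G (J r) (L r)) * X L.

Lemma gcontract_pair_upd {m} G Rm (X : idx m -> R) (s u : 'I_m) : s != u ->
  gcontract G (fun J => \sum_a \sum_b X (upd (upd J s a) u b) * Rm a b (J s) (J u)) X =
  pair_contract G Rm X s u.
Proof.
move=> su; have us : u != s by rewrite eq_sym.
rewrite /gcontract /pair_contract exchange_big [RHS]exchange_big.
apply: eq_bigr => L _.
transitivity (\sum_(J : idx m) \sum_a \sum_b (\prod_(r < m) G (J r) (L r)) *
    (X (upd (upd J s a) u b) * Rm a b (J s) (J u)) * X L).
  apply: eq_bigr => J _; rewrite mulr_sumr mulr_suml; apply: eq_bigr => a _.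
  by rewrite mulr_sumr mulr_suml.
rewrite (@sum_upd_reindex R n m s _ (fun K c => \sum_b G c (L s) *
    (\prod_(r < m | r != s) G (K r) (L r)) * X (upd K u b) *
    Rm (K s) b c (K u) * X L)); last first.
  move=> J a; rewrite upd_same (upd_other _ _ _ _ us); apply: eq_bigr => b _.
  by rewrite prod_upd_out // [\prod_(r < m) _](bigD1 s) //=; ring.
rewrite exchange_big /=.
transitivity (\sum_c \sum_(K : idx m) \sum_d G c (L s) * G d (L u) *
    (\prod_(r < m | (r != s) && (r != u)) G (K r) (L r)) * X K *
    Rm (K s) (K u) c d * X L).
  apply: eq_bigr => c _.
  rewrite (@sum_upd_reindex R n m u _ (fun K d => G c (L s) * G d (L u) *
      (\prod_(r < m | (r != s) && (r != u)) G (K r) (L r)) * X K *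
      Rm (K s) (K u) c d * X L)) // => K b.
  rewrite upd_same (upd_other _ _ _ _ su) [\prod_(r < m | r != s) _](bigD1 u) //=.
  by rewrite prod_upd_out => [|r /andP[]] //; ring.
rewrite exchange_big; apply: eq_bigr => J _; apply: eq_bigr => c _.
by apply: eq_bigr => d _; ring.
Qed.

Lemma pair_contract_tperm {m} G Rm (X : idx m -> R) (a b s u : 'I_m) :
  (forall J : idx m, a != b -> X [ffun k => J (tperm a b k)] = - X J) ->
  pair_contract G Rm X s u = pair_contract G Rm X (tperm a b s) (tperm a b u).
Proof.
move=> Xanti; set tau := tperm a b.
pose sw (J : idx m) := [ffun k => J (tau k)].
have tauK : involutive tau by move=> k; rewrite tpermK.
have swK : involutive sw by move=> J; apply/ffunP => k; rewrite !ffunE tauK.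
have XX J L : X (sw J) * X (sw L) = X J * X L.
  have [ab|ab] := eqVneq a b; last by rewrite !Xanti //; ring.
  have swE K : sw K = K by apply/ffunP => k; rewrite ffunE /tau ab tperm1 perm1.
  by rewrite !swE.
have sw_bij : {on predT, bijective sw} by apply: onW_bij; exact: inv_bij.
rewrite /pair_contract [RHS](reindex sw) //; apply: eq_bigr => J _.
rewrite [RHS](reindex sw) //; apply: eq_bigr => L _.
apply: eq_bigr => c _; apply: eq_bigr => d _; rewrite !ffunE !tauK.
have -> : \prod_(r < m | (r != tau s) && (r != tau u)) G (sw J r) (sw L r)
        = \prod_(r < m | (r != s) && (r != u)) G (J r) (L r).
  rewrite [RHS](reindex_inj (@perm_inj _ tau)) /=; apply: eq_big => r.
    by rewrite !(canF_eq tauK).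
  by rewrite !ffunE.
set P := \prod_(r < m | _) _.
transitivity (X J * X L * (Rm (J s) (J u) c d * G c (L s) * G d (L u) * P)).
  by ring.
by rewrite -XX; ring.
Qed.

(* Two transpositions move any pair of distinct slots to the first two. *)
Lemma pair_contract_ord01 {q} G Rm (X : idx q.+2 -> R) :
  (forall (J : idx q.+2) a b, a != b -> X [ffun k => J (tperm a b k)] = - X J) ->
  forall s u : 'I_q.+2, s != u ->
  pair_contract G Rm X s u = pair_contract G Rm X ord0 (lift ord0 ord0).
Proof.
move=> Xanti s u su.
rewrite (pair_contract_tperm G Rm X s ord0 s u (fun J => Xanti J s ord0)) tpermL.
set v := tperm s ord0 u.
have v0 : v != ord0 by rewrite /v (canF_eq (tpermK _ _)) tpermR eq_sym.
rewrite (pair_contract_tperm G Rm X v (lift ord0 ord0) ord0 v (fun J => Xanti J v _)).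
by rewrite tpermL tpermD // eq_sym neq_lift.
Qed.

End PairContraction.

Section HodgeLaplacian.
Context {R : realType} {n : nat} (g : @metric R n) {p : nat} (xi : @tensor R n p).

Definition rough_lap : @tensor R n p := fun I x t =>
  \sum_j \sum_k ginv g j k x t * cov g (cov g xi) (snoc (snoc I j) k) x t.

Definition ricci_term : @tensor R n p := fun I x t =>
  \sum_(s < p) \sum_a xi (upd I s a) x t * Ric_up g a (I s) x t.

Definition riemann_term : @tensor R n p := fun I x t =>
  \sum_(s < p) \sum_(u < p | (s < u)%N) \sum_a \sum_b
     xi (upd (upd I s a) u b) x t * Riem_up g a b (I s) (I u) x t.

Lemma hodge_lapE I x t :
  hodge_lap g xi I x t = rough_lap I x t - ricci_term I x t - riemann_term I x t.
Proof. by []. Qed.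

Lemma innerE {m} (A B : @tensor R n m) x t : inner g A B x t =
  gcontract (fun a b => ginv g a b x t) (fun J => A J x t) (fun L => B L x t).
Proof. by []. Qed.

Lemma inner_riemann_term_pairs x t : inner g riemann_term xi x t =
  \sum_(s < p) \sum_(u < p | (s < u)%N)
    pair_contract (fun a b => ginv g a b x t) (fun a b c d => Riem_up g a b c d x t)
      (fun J => xi J x t) s u.
Proof.
rewrite innerE gcontract_suml; apply: eq_bigr => s _.
rewrite gcontract_suml; apply: eq_bigr => u su; apply: gcontract_pair_upd.
by rewrite -[s == u]/(val s == val u) ltn_eqF.
Qed.

End HodgeLaplacian.

Lemma pair_contract01_curv_term {R : realType} {n q : nat} (g : @metric R n)
    (xi : @tensor R n q.+2) x t :
  pair_contract (fun a b => ginv g a b x t) (fun a b c d => Riem_up g a b c d x t)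
    (fun J => xi J x t) ord0 (lift ord0 ord0) = curv_term g xi x t.
Proof.
have prod01 (F : 'I_q.+2 -> R) :
    \prod_(r < q.+2 | (r != ord0) && (r != lift ord0 ord0)) F r =
    \prod_(s < q) F (lift ord0 (lift ord0 s)).
  by rewrite big_mkcond big_ord_recl /= mul1r big_ord_recl /= mul1r.
apply: eq_bigr => J _; apply: eq_bigr => L _; apply: eq_bigr => c _.
by apply: eq_bigr => d _; rewrite prod01; ring.
Qed.

Lemma inner_riemann_term {R : realType} {n p : nat} (g : @metric R n)
    (xi : @tensor R n p) x t : antisym xi ->
  2 * inner g (riemann_term g xi) xi x t = (p * (p - 1))%:R * curv_term g xi x t.
Proof.
rewrite inner_riemann_term_pairs; case: p xi => [|[|q]] xi xi_anti.
- by rewrite big_ord0 mulr0 mul0r.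
- by rewrite big_ord1 big1 ?mulr0 ?mul0r // => u; rewrite (ord1 u).
set Pc := pair_contract _ _ _.
have Pc01 (s u : 'I_q.+2) : (s < u)%N -> Pc s u = Pc ord0 (lift ord0 ord0).
  move=> su; apply: pair_contract_ord01 => [J a b ab|]; first exact: xi_anti.
  by rewrite -[s == u]/(val s == val u) ltn_eqF.
transitivity (2 * (\sum_(s < q.+2) \sum_(u < q.+2 | (s < u)%N) (1 : R)) *
              Pc ord0 (lift ord0 ord0)).
  rewrite -mulrA mulr_suml; congr (_ * _); apply: eq_bigr => s _.
  by rewrite mulr_suml; apply: eq_bigr => u su; rewrite Pc01 // mul1r.
by rewrite sum_pairs_lt /Pc pair_contract01_curv_term.
Qed.

Section Geometry.
Context {R : realType} {n : nat} {U : set 'rV[R]_n} {T : R} {g : @metric R n}.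
Hypothesis open_U : open U.
Hypothesis smooth_g : forall i j, smooth_on U T (g i j).
Hypothesis g_sym : forall i j x t, U x -> 0 < t < T -> g i j x t = g j i x t.
Hypothesis g_pos : forall x t, U x -> 0 < t < T ->
  forall v : 'rV[R]_n, v != 0 -> 0 < (v *m gmx g x t *m v^T) 0 0.

Lemma derivable_pds_x os {f x t} : smooth_on U T f -> U x -> 0 < t < T ->
  forall k, derivable (fun y => pds os f y t) x (evec k).
Proof. by move=> sf Ux Ht; case: (sf os x t Ux Ht). Qed.

Lemma derivable_pds_t os {f x t} : smooth_on U T f -> U x -> 0 < t < T ->
  derivable (fun s => pds os f x s) t 1.
Proof. by move=> sf Ux Ht; case: (sf os x t Ux Ht). Qed.

Lemma near_in_U {x} : U x -> \forall y \near x, U y.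
Proof. by move=> Ux; exact: open_U. Qed.

Lemma near_in_time {t} : 0 < t < T -> \forall s \near t, 0 < s < T.
Proof.
case/andP => t0 tT; near=> s; apply/andP; split; near: s.
  exact: lt_nbhsr.
exact: lt_nbhsl.
Unshelve. all: by end_near.
Qed.

Lemma gmx_unit x t : U x -> 0 < t < T -> gmx g x t \in unitmx.
Proof.
move=> Ux Ht; rewrite unitmxE unitfE; apply/negP => /det0P [v v0 vM].
by have := g_pos x t Ux Ht v v0; rewrite vM mul0mx mxE ltxx.
Qed.

Lemma ginv_sym a b x t : U x -> 0 < t < T -> ginv g a b x t = ginv g b a x t.
Proof.
move=> Ux Ht; have gT : (gmx g x t)^T = gmx g x t.
  by apply/matrixP => i j; rewrite !mxE g_sym.
by rewrite /ginv -[in RHS]gT -trmx_inv mxE.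
Qed.

Lemma derivable_gmx_x i j k {x t} : U x -> 0 < t < T ->
  derivable (fun y => gmx g y t i j) x (evec k).
Proof.
move=> Ux Ht; rewrite [X in derivable X](_ : _ = fun y => g i j y t).
  exact: (derivable_pds_x [::] (smooth_g i j) Ux Ht k).
by apply/funext => y; rewrite mxE.
Qed.

Lemma derivable_gmx_t i j {x t} : U x -> 0 < t < T ->
  derivable (fun s => gmx g x s i j) t 1.
Proof.
move=> Ux Ht; rewrite [X in derivable X](_ : _ = fun s => g i j x s).
  exact: (derivable_pds_t [::] (smooth_g i j) Ux Ht).
by apply/funext => s; rewrite mxE.
Qed.

Lemma near_gmx_unit_x {x t} : U x -> 0 < t < T ->
  \forall y \near x, gmx g y t \in unitmx.
Proof. by move=> Ux Ht; apply: filterS (near_in_U Ux) => y Uy; exact: gmx_unit. Qed.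

Lemma near_gmx_unit_t {x t} : U x -> 0 < t < T ->
  \forall s \near t, gmx g x s \in unitmx.
Proof. by move=> Ux Ht; apply: filterS (near_in_time Ht) => s Hs; exact: gmx_unit. Qed.

Lemma derivable_ginv_x a b k x t : U x -> 0 < t < T ->
  derivable (fun y => ginv g a b y t) x (evec k).
Proof.
move=> Ux Ht; apply: (derivable_invmx (fun y => gmx g y t)).
  by move=> i j; exact: derivable_gmx_x.
exact: near_gmx_unit_x.
Qed.

Lemma derivable_ginv_t a b x t : U x -> 0 < t < T ->
  derivable (fun s => ginv g a b x s) t 1.
Proof.
move=> Ux Ht; apply: (derivable_invmx (fun s => gmx g x s)).
  by move=> i j; exact: derivable_gmx_t.
exact: near_gmx_unit_t.
Qed.

Lemma dx_g_sym a b k x t : U x -> 0 < t < T -> dx (g a b) k x t = dx (g b a) k x t.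
Proof.
move=> Ux Ht; apply: near_eq_derive.
by apply: filterS (near_in_U Ux) => y Uy; exact: g_sym.
Qed.

(* Metric compatibility of the Levi-Civita connection. *)
Lemma dx_ginv a b k x t : U x -> 0 < t < T ->
  dx (ginv g a b) k x t = - (\sum_c ginv g a c x t * Chr g b k c x t)
                          - \sum_c Chr g a k c x t * ginv g c b x t.
Proof.
move=> Ux Ht; rewrite /dx (derive_invmx (fun y => gmx g y t) x (evec k)
  (fun i j => derivable_gmx_x i j k Ux Ht) (near_gmx_unit_x Ux Ht)).
set Gi := invmx (gmx g x t).
pose Dg := \matrix_(c, d) dx (g c d) k x t.
pose X := \matrix_(l, c) (dx (g l c) k x t + dx (g l k) c x t - dx (g k c) l x t).
pose Gam := \matrix_(l, c) Chr g l k c x t.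
have GamE : Gam = 2^-1 *: (Gi *m X).
  apply/matrixP => l c; rewrite !mxE; congr (_ * _).
  by apply: eq_bigr => m _; rewrite !mxE.
have DgE : Dg = 2^-1 *: (X + X^T).
  apply/matrixP => c d; rewrite !mxE (dx_g_sym d c) // (dx_g_sym d k) //.
  by rewrite (dx_g_sym c k d) //; field.
have GiT : Gi^T = Gi by apply/matrixP => c d; rewrite mxE; exact: ginv_sym.
have Gi_Dg_Gi : Gi *m Dg *m Gi = Gam *m Gi + Gi *m Gam^T.
  have -> : Gam^T = 2^-1 *: (X^T *m Gi) by rewrite GamE linearZ /= trmx_mul GiT.
  rewrite DgE GamE -!scalemxAr -!scalemxAl -scalerDr.
  by rewrite mulmxDr mulmxDl !mulmxA.
have -> : \sum_c \sum_d Gi a c * 'D_(evec k) (fun y => gmx g y t c d) x * Gi d b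
    = (Gi *m Dg *m Gi) a b.
  rewrite mxE exchange_big; apply: eq_bigr => d _; rewrite mxE mulr_suml.
  apply: eq_bigr => c _; rewrite !mxE; congr (_ * _ * _).
  by rewrite /dx; congr ('D_ _ _ _); apply/funext => y; rewrite mxE.
rewrite Gi_Dg_Gi !mxE opprD addrC.
by congr (- _ - _); apply: eq_bigr => c _; rewrite !mxE.
Qed.

Definition covd {m} (A : @tensor R n m) (k : 'I_n) : @tensor R n m :=
  fun J => cov g A (snoc J k).

Lemma covdE {m} (A : @tensor R n m) k J x t : covd A k J x t =
  dx (A J) k x t - slot_act (fun a c => Chr g c k a x t) (A^~ x^~ t) J.
Proof. by rewrite /covd /cov init_snoc snoc_max. Qed.

Lemma derivable_inner_x {m} (A B : @tensor R n m) k x t : U x -> 0 < t < T ->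
  (forall J, derivable (fun y => A J y t) x (evec k)) ->
  (forall L, derivable (fun y => B L y t) x (evec k)) ->
  derivable (fun y => inner g A B y t) x (evec k).
Proof.
move=> Ux Ht dA dB; apply: (derivable_gcontract (fun a b y => ginv g a b y t)) => //.
by move=> a b; exact: derivable_ginv_x.
Qed.

Lemma dx_inner {m} (A B : @tensor R n m) k x t : U x -> 0 < t < T ->
  (forall J, derivable (fun y => A J y t) x (evec k)) ->
  (forall L, derivable (fun y => B L y t) x (evec k)) ->
  dx (inner g A B) k x t = inner g (covd A k) B x t + inner g A (covd B k) x t.
Proof.
move=> Ux Ht dA dB; set Gx := fun a b => ginv g a b x t.
set K := fun a c => Chr g c k a x t.
rewrite /dx (derive_gcontract (fun a b y => ginv g a b y t)) //; last first.
  by move=> a b; exact: derivable_ginv_x.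
have -> : inner g (covd A k) B x t =
    gcontract Gx (fun J => dx (A J) k x t - slot_act K (A^~ x^~ t) J) (B^~ x^~ t).
  by apply: eq_gcontract => // J; rewrite covdE.
have -> : inner g A (covd B k) x t =
    gcontract Gx (A^~ x^~ t) (fun L => dx (B L) k x t - slot_act K (B^~ x^~ t) L).
  by apply: eq_gcontract => // L; rewrite covdE.
rewrite gcontractBl gcontractBr gcontract_slot_actl gcontract_slot_actr.
rewrite (@gcontract_var_lin _ _ _ _ _ (fun a b => \sum_c Gx c b * K c a)
   (fun a b => \sum_c Gx a c * K c b) (-1) (-1)); last first.
  move=> a b; rewrite -/(dx (ginv g a b) k x t) dx_ginv // addrC !mulN1r.
  by congr (- _ - _); apply: eq_bigr => c _; rewrite mulrC.
rewrite /dx; ring.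
Qed.

Lemma cov_scalar (f : stfun) (K : {ffun 'I_1 -> 'I_n}) :
  cov g ((fun _ => f) : @tensor R n 0) K = dx f (K ord_max).
Proof. by apply/funext => y; apply/funext => s; rewrite /cov big_ord0 subr0. Qed.

Lemma lap_funE (f : stfun) x t : lap_fun g f x t =
  \sum_i \sum_j ginv g i j x t *
     (dx (dx f i) j x t - \sum_a Chr g a j i x t * dx f a x t).
Proof.
apply: eq_bigr => i _; apply: eq_bigr => j _; congr (_ * _).
rewrite {1}/cov init_snoc snoc_max !cov_scalar snoc_max big_ord1.
congr (_ - _); apply: eq_bigr => a _.
have -> : (ord0 : 'I_1) = ord_max by apply/val_inj.
by rewrite snoc_max upd_snoc_max cov_scalar snoc_max.
Qed.

Lemma derivable_Chr_x l a b k x t : U x -> 0 < t < T ->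
  derivable (fun y => Chr g l a b y t) x (evec k).
Proof.
move=> Ux Ht; apply: derivableM; first exact: derivable_cst.
apply: (derivable_big_sum _ _ _ (fun m y => ginv g l m y t *
   (dx (g m b) a y t + dx (g m a) b y t - dx (g a b) m y t))) => m _.
apply: derivableM; first exact: derivable_ginv_x.
apply: derivableB; first apply: derivableD.
- exact: (derivable_pds_x [:: PDx a] (smooth_g m b) Ux Ht k).
- exact: (derivable_pds_x [:: PDx b] (smooth_g m a) Ux Ht k).
- exact: (derivable_pds_x [:: PDx m] (smooth_g a b) Ux Ht k).
Qed.

Lemma innerC {m} (A B : @tensor R n m) x t : U x -> 0 < t < T ->
  inner g A B x t = inner g B A x t.
Proof. by move=> Ux Ht; rewrite !innerE gcontractC // => a b; exact: ginv_sym. Qed.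

Section Form.
Context {p : nat} {xi : @tensor R n p}.
Hypothesis smooth_xi : forall I, smooth_on U T (xi I).

Lemma covd_covd i j I x t : covd (covd xi i) j I x t =
  cov g (cov g xi) (snoc (snoc I i) j) x t + \sum_a Chr g a j i x t * covd xi a I x t.
Proof.
rewrite /covd {1}/cov init_snoc snoc_max.
rewrite [cov g (cov g xi) _]/cov init_snoc snoc_max big_ord_recr /=.
have -> : \sum_a Chr g a j (snoc I i ord_max) x t *
      cov g xi (upd (snoc I i) ord_max a) x t =
    \sum_a Chr g a j i x t * cov g xi (snoc I a) x t.
  by apply: eq_bigr => a _; rewrite snoc_max upd_snoc_max.
have -> : \sum_(s < p) \sum_a Chr g a j (snoc I i (widen_ord (leqnSn p) s)) x t *
      cov g xi (upd (snoc I i) (widen_ord (leqnSn p) s) a) x t =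
    \sum_(s < p) \sum_a Chr g a j (I s) x t * cov g xi (snoc (upd I s a) i) x t.
  apply: eq_bigr => s _; apply: eq_bigr => a _.
  by rewrite widen_ord_lift_max snoc_lift upd_snoc_lift.
ring.
Qed.

Lemma derivable_xi_x J k x t : U x -> 0 < t < T ->
  derivable (fun y => xi J y t) x (evec k).
Proof. by move=> Ux Ht; exact: (derivable_pds_x [::] (smooth_xi J) Ux Ht k). Qed.

Lemma derivable_covd_x i J k x t : U x -> 0 < t < T ->
  derivable (fun y => covd xi i J y t) x (evec k).
Proof.
move=> Ux Ht; rewrite [X in derivable X](_ : _ = fun y => dx (xi J) i y t -
    \sum_(s < p) \sum_c Chr g c i (J s) y t * xi (upd J s c) y t); last first.
  by apply/funext => y; rewrite covdE.
apply: derivableB; first exact: (derivable_pds_x [:: PDx i] (smooth_xi J) Ux Ht k).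
apply: (derivable_big_sum _ _ _
  (fun s y => \sum_c Chr g c i (J s) y t * xi (upd J s c) y t)) => s _.
apply: (derivable_big_sum _ _ _
  (fun c y => Chr g c i (J s) y t * xi (upd J s c) y t)) => c _.
by apply: derivableM; [exact: derivable_Chr_x | exact: derivable_xi_x].
Qed.

Lemma dx_norm2 a x t : U x -> 0 < t < T ->
  dx (norm2 g xi) a x t = 2 * inner g (covd xi a) xi x t.
Proof.
move=> Ux Ht; rewrite dx_inner // => [|J|J]; try exact: derivable_xi_x.
by rewrite (innerC xi) //; ring.
Qed.

Definition cov2 i j : @tensor R n p := fun I => cov g (cov g xi) (snoc (snoc I i) j).

Lemma hess_norm2 i j x t : U x -> 0 < t < T ->
  dx (dx (norm2 g xi) i) j x t - \sum_a Chr g a j i x t * dx (norm2 g xi) a x t =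
  2 * inner g (cov2 i j) xi x t + 2 * inner g (covd xi i) (covd xi j) x t.
Proof.
move=> Ux Ht.
have dcovd J : derivable (fun y => covd xi i J y t) x (evec j).
  exact: derivable_covd_x.
have dxi J : derivable (fun y => xi J y t) x (evec j) by exact: derivable_xi_x.
have -> : dx (dx (norm2 g xi) i) j x t = 2 * dx (inner g (covd xi i) xi) j x t.
  rewrite {1}/dx (@near_eq_derive _ _ _ _
      (fun y => 2 * inner g (covd xi i) xi y t)).
    by rewrite deriveZ_pointwise //; exact: derivable_inner_x.
  by apply: filterS (near_in_U Ux) => y Uy; exact: dx_norm2.
have -> : \sum_a Chr g a j i x t * dx (norm2 g xi) a x t =
    2 * \sum_a Chr g a j i x t * inner g (covd xi a) xi x t.
  by rewrite mulr_sumr; apply: eq_bigr => a _; rewrite dx_norm2 //; ring.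
rewrite dx_inner //.
have -> : inner g (covd (covd xi i) j) xi x t =
    gcontract (fun a b => ginv g a b x t)
      (fun I => cov2 i j I x t + \sum_a Chr g a j i x t * covd xi a I x t)
      (fun L => xi L x t).
  by apply: eq_gcontract => // I; exact: covd_covd.
rewrite gcontractDl gcontract_suml.
under eq_bigr => a _ do rewrite gcontractZl.
rewrite !innerE; ring.
Qed.

Lemma lap_fun_norm2 x t : U x -> 0 < t < T ->
  lap_fun g (norm2 g xi) x t =
  2 * inner g (rough_lap g xi) xi x t + 2 * inner g (cov g xi) (cov g xi) x t.
Proof.
move=> Ux Ht; rewrite lap_funE.
under eq_bigr => i _ do under eq_bigr => j _ do rewrite (hess_norm2 i j x t Ux Ht).
have -> : inner g (rough_lap g xi) xi x t =
    \sum_i \sum_j ginv g i j x t * inner g (cov2 i j) xi x t.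
  rewrite innerE gcontract_suml; apply: eq_bigr => i _.
  by rewrite gcontract_suml; apply: eq_bigr => j _; rewrite gcontractZl.
have -> : inner g (cov g xi) (cov g xi) x t =
    \sum_i \sum_j ginv g i j x t * inner g (covd xi i) (covd xi j) x t.
  by rewrite innerE gcontract_snoc.
rewrite !mulr_sumr -big_split; apply: eq_bigr => i _.
by rewrite !mulr_sumr -big_split; apply: eq_bigr => j _ /=; ring.
Qed.

Hypothesis ricci_flow : forall i j x t, U x -> 0 < t < T ->
  dt (g i j) x t = - 2 * Ric g i j x t.
Hypothesis heat_xi : forall I x t, U x -> 0 < t < T ->
  dt (xi I) x t = hodge_lap g xi I x t.

Lemma dt_ginv a b x t : U x -> 0 < t < T ->
  dt (ginv g a b) x t = 2 * \sum_c \sum_d ginv g a c x t * Ric g c d x t * ginv g d b x t.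
Proof.
move=> Ux Ht; rewrite /dt (derive_invmx (fun s => gmx g x s) t 1
  (fun i j => derivable_gmx_t i j Ux Ht) (near_gmx_unit_t Ux Ht)).
rewrite mulr_sumr -sumrN; apply: eq_bigr => c _.
rewrite mulr_sumr -sumrN; apply: eq_bigr => d _.
rewrite [X in 'D_1 X t](_ : _ = fun s => g c d x s); last first.
  by apply/funext => s; rewrite mxE.
by rewrite -/(dt (g c d) x t) ricci_flow // /ginv; ring.
Qed.

(* The variation of the metric cancels the Ricci terms of [hodge_lap]. *)
Lemma dt_norm2 x t : U x -> 0 < t < T ->
  dt (norm2 g xi) x t =
  2 * inner g (rough_lap g xi) xi x t - 2 * inner g (riemann_term g xi) xi x t.
Proof.
move=> Ux Ht.
have dG a b : derivable (fun s => ginv g a b x s) t 1 by exact: derivable_ginv_t.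
have dxi J : derivable (fun s => xi J x s) t 1.
  exact: (derivable_pds_t [::] (smooth_xi J) Ux Ht).
have -> : dt (norm2 g xi) x t = 'D_1 (fun s => gcontract (fun a b => ginv g a b x s)
    (fun J => xi J x s) (fun L => xi L x s)) t by [].
rewrite (derive_gcontract _ _ _ _ _ dG dxi dxi).
set G := fun a b => ginv g a b x t; set X := fun J => xi J x t.
have hod J : 'D_1 (fun s => xi J x s) t =
    rough_lap g xi J x t - ricci_term g xi J x t - riemann_term g xi J x t.
  by rewrite -hodge_lapE -heat_xi.
rewrite (eq_gcontract G hod (fun=> erefl)) (eq_gcontract G (fun=> erefl) hod).
rewrite [gcontract G X _]gcontractC; last by move=> a b; exact: ginv_sym.
rewrite !gcontractBl.
have -> : gcontract G (fun J => ricci_term g xi J x t) X =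
    gcontract_var G (fun a b => \sum_c G c b * Ric_up g a c x t) X X.
  rewrite -(gcontract_slot_actl G (fun a c => Ric_up g c a x t)).
  apply: eq_gcontract => // J; apply: eq_bigr => s _; apply: eq_bigr => c _.
  exact: mulrC.
rewrite (@gcontract_var_lin _ _ _ _ _ (fun a b => \sum_c G c b * Ric_up g a c x t)
   (fun a b => \sum_c G c b * Ric_up g a c x t) 2 0); last first.
  move=> a b; rewrite -/(dt (ginv g a b) x t) dt_ginv // mul0r addr0.
  congr (_ * _); under [RHS]eq_bigr => c _ do rewrite mulr_sumr.
  rewrite [RHS]exchange_big; apply: eq_bigr => c _; apply: eq_bigr => d _.
  by rewrite /G; ring.
rewrite !innerE -/G -/X; ring.
Qed.

End Form.

End Geometry.

Theorem lemma1 (R : realType) (n p : nat) (U : set 'rV[R]_n) (T : R)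
  (g : @metric R n) (xi : @tensor R n p) :
  open U ->
  (forall i j, smooth_on U T (g i j)) ->
  (forall i j x t, U x -> 0 < t < T -> g i j x t = g j i x t) ->
  (forall x t, U x -> 0 < t < T ->
     forall v : 'rV[R]_n, v != 0 -> 0 < (v *m gmx g x t *m v^T) 0 0) ->
  (forall i j x t, U x -> 0 < t < T -> dt (g i j) x t = - 2 * Ric g i j x t) ->
  (forall I, smooth_on U T (xi I)) ->
  antisym xi ->
  (forall I x t, U x -> 0 < t < T -> dt (xi I) x t = hodge_lap g xi I x t) ->
  forall x t, U x -> 0 < t < T ->
    dt (norm2 g xi) x t =
      lap_fun g (norm2 g xi) x t
      - 2 * inner g (cov g xi) (cov g xi) x t
      - (p * (p - 1))%:R * curv_term g xi x t.
Proof.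
move=> open_U smooth_g g_sym g_pos ricci_flow smooth_xi xi_anti heat_xi x t Ux Ht.
rewrite (dt_norm2 (U := U) (T := T)) // (lap_fun_norm2 (U := U) (T := T)) //.
rewrite -(inner_riemann_term g xi x t xi_anti); ring.
Qed.
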